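(* Let $\Delta,\Sigma$ be alphabets, $\varphi:\Delta\to2^{\Sigma^*}$ a regular language substitution, and $K_1,K_2\subseteq\Delta^+$ regular languages such that $\mathcal{R}_1=(K_1,\varphi)$ and $\mathcal{R}_2=(K_2,\varphi)$ are finite. Then the symmetric difference $\mathcal{R}_1\,\Delta\,\mathcal{R}_2=(\mathcal{R}_1\cup\mathcal{R}_2)-(\mathcal{R}_1\cap\mathcal{R}_2)$ is a finite rational set of regular languages that can be expressed with the language substitution $\varphi$, i.e. it equals $(K_3,\varphi)$ for some regular $K_3\subseteq\Delta^+$.
   Context: A regular language substitution $\varphi:\Delta\to2^{\Sigma^*}$ maps each symbol to a regular language over $\Sigma$, extended by $\varphi(\delta w)=\varphi(\delta)\varphi(w)$. For $K\subseteq\Delta^+$, $(K,\varphi)=\{\varphi(w)\mid w\in K\}$; when $K$ is regular this set is a rational set of regular languages. *)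

(* Languages are Prop-valued predicates on words;
   sets of languages are predicates on languages (Leibniz equality of languages,
   i.e. extensional via funext/propext). *)
From Stdlib Require List.
From mathcomp Require Import all_boot.
Set Implicit Arguments. Unset Strict Implicit. Unset Printing Implicit Defensive.

Definition lang (A : finType) := seq A -> Prop.

Record dfa (A : finType) := DFA {
  dfa_state : finType;
  dfa_s0 : dfa_state;
  dfa_final : pred dfa_state;
  dfa_step : dfa_state -> A -> dfa_state }.

Definition dfa_accepts (A : finType) (M : dfa A) (w : seq A) : bool :=
  @dfa_final A M (foldl (@dfa_step A M) (@dfa_s0 A M) w).

Definition regular (A : finType) (L : lang A) : Prop :=
  exists M : dfa A, forall w, L w <-> dfa_accepts M w.

Definition in_plus (A : finType) (L : lang A) : Prop :=
  forall w, L w -> w <> [::].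

Definition lang_eps (A : finType) : lang A := fun w => w = [::].

Definition lang_cat (A : finType) (L1 L2 : lang A) : lang A :=
  fun w => exists u v, w = u ++ v /\ L1 u /\ L2 v.

Definition subst_word (D S : finType) (phi : D -> lang S) (w : seq D) : lang S :=
  foldr (fun d L => lang_cat (phi d) L) (@lang_eps S) w.

Definition regular_subst (D S : finType) (phi : D -> lang S) : Prop :=
  forall d, regular (phi d).

Definition subst_set (D S : finType) (K : lang D) (phi : D -> lang S)
  : lang S -> Prop :=
  fun L => exists w, K w /\ L = subst_word phi w.

Definition finite_langset (S : finType) (R : lang S -> Prop) : Prop :=
  exists l : seq (lang S), forall L, R L <-> List.In L l.

Definition symdiff_langset (S : finType) (R1 R2 : lang S -> Prop)
  : lang S -> Prop :=
  fun L => (R1 L \/ R2 L) /\ ~ (R1 L /\ R2 L).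

(* The
   symmetric difference of two such finite sets is a finite subset of their
   union, so it is of this form with K' ⊆ K1 ∪ K2 ⊆ Δ^+. *)
From Stdlib Require Import ClassicalEpsilon.
From mathcomp Require Import all_boot.
Set Implicit Arguments. Unset Strict Implicit. Unset Printing Implicit Defensive.

Section FiniteRegular.
Variable A : finType.

Definition prefixes (w : seq A) : seq (seq A) :=
  [seq take i w | i <- iota 0 (size w).+1].

Lemma mem_prefixes u w : (u \in prefixes w) = prefix u w.
Proof.
apply/mapP/idP => [[i _ ->] | uw]; first exact: prefix_take.
exists (size u); last by move: uw; rewrite prefixE => /eqP.
by rewrite mem_iota add0n ltnS size_prefix.
Qed.

Variable s : seq (seq A).

Definition prefix_closure : seq (seq A) := flatten [seq prefixes w | w <- s].

Lemma mem_prefix_closure u : (u \in prefix_closure) = has (prefix u) s.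
Proof.
apply/flattenP/hasP => [[_ /mapP [w ws ->]] | [w ws uw]].
  by rewrite mem_prefixes; exists w.
by exists (prefixes w); [apply: map_f | rewrite mem_prefixes].
Qed.

Lemma prefix_closure_catl u v :
  u ++ v \in prefix_closure -> u \in prefix_closure.
Proof. by rewrite !mem_prefix_closure; apply: sub_has => w /catl_prefix. Qed.

(* The trie of s, with [None] as the rejecting sink state. *)
Definition trie_step (o : option (seq_sub prefix_closure)) (a : A)
    : option (seq_sub prefix_closure) :=
  if o is Some u then insub (rcons (val u) a) else None.

Definition trie_dfa : dfa A :=
  @DFA A (option (seq_sub prefix_closure)) (insub [::])
    (fun o => if o is Some u then val u \in s else false) trie_step.

Lemma trie_step_insub u a : trie_step (insub u) a = insub (rcons u a).
Proof.
case: insubP => [x _ <- // | nPu] /=.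
by rewrite insubN //; apply: contra nPu; rewrite -cats1; apply: prefix_closure_catl.
Qed.

Lemma trie_run u v :
  foldl trie_step (insub u) v = insub (u ++ v) :> option (seq_sub prefix_closure).
Proof. by elim: v u => [|a v IHv] u /=; rewrite ?cats0 // trie_step_insub IHv cat_rcons. Qed.

Lemma trie_dfa_accepts v : dfa_accepts trie_dfa v = (v \in s).
Proof.
rewrite /dfa_accepts /= trie_run /=.
case: insubP => [x _ <- // | nPv]; apply/esym/negbTE; apply: contra nPv => vs.
by rewrite mem_prefix_closure; apply/hasP; exists v; rewrite ?prefix_refl.
Qed.

Lemma regular_mem_seq : regular (fun w => w \in s).
Proof. by exists trie_dfa => w; rewrite trie_dfa_accepts. Qed.

End FiniteRegular.

Section FiniteLangset.
Variable S : finType.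
Implicit Types R : lang S -> Prop.

Lemma finite_langset_sub R1 R2 :
  (forall L, R1 L -> R2 L) -> finite_langset R2 -> finite_langset R1.
Proof.
move=> R12 [l Rl].
exists (List.filter (fun L => if excluded_middle_informative (R1 L) then true else false) l).
move=> L; rewrite List.filter_In; case: excluded_middle_informative => R1L.
  by split=> [|[]] //; split; [apply/Rl/R12 |].
by split=> [|[]].
Qed.

Lemma finite_langsetU R1 R2 : finite_langset R1 -> finite_langset R2 ->
  finite_langset (fun L => R1 L \/ R2 L).
Proof.
move=> [l1 Rl1] [l2 Rl2]; exists (l1 ++ l2) => L.
by rewrite List.in_app_iff Rl1 Rl2.
Qed.

Lemma finite_symdiff_langset R1 R2 : finite_langset R1 -> finite_langset R2 ->
  finite_langset (symdiff_langset R1 R2).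
Proof.
move=> fR1 fR2; apply: finite_langset_sub (finite_langsetU fR1 fR2).
by move=> L [].
Qed.

End FiniteLangset.

Lemma subst_set_finite_words (D S : finType) (phi : D -> lang S) (K : lang D)
    (l : list (lang S)) :
  (forall L, List.In L l -> subst_set K phi L) ->
  exists ws : seq (seq D), (forall w, w \in ws -> K w) /\
    forall L, List.In L l <-> subst_set (fun w => w \in ws) phi L.
Proof.
elim: l => [|L0 l IHl] lK.
  by exists [::]; split=> // L; split=> // [[w []]].
have [w0 [Kw0 ->]] := lK L0 (or_introl erefl).
have [ws [wsK lws]] := IHl (fun L lL => lK L (or_intror lL)).
exists (w0 :: ws); split=> [w | L].
  by rewrite in_cons => /orP [/eqP -> | /wsK].
split=> [[<- | /lws [w [wws ->]]] | [w []]].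
- by exists w0; rewrite mem_head.
- by exists w; rewrite in_cons wws orbT.
rewrite in_cons => /orP [/eqP -> -> | wws ->]; first by left.
by right; apply/lws; exists w.
Qed.

Lemma finite_subst_set_sub (D S : finType) (phi : D -> lang S) (K : lang D)
    (R : lang S -> Prop) :
  finite_langset R -> (forall L, R L -> subst_set K phi L) ->
  exists ws : seq (seq D), (forall w, w \in ws -> K w) /\
    forall L, R L <-> subst_set (fun w => w \in ws) phi L.
Proof.
move=> [l Rl] RK.
have [ws [wsK lws]] := @subst_set_finite_words D S phi K l (fun L lL => RK L (proj2 (Rl L) lL)).
by exists ws; split=> // L; rewrite Rl.
Qed.

Theorem proposition11 (D S : finType) (phi : D -> lang S) (K1 K2 : lang D) :
  regular_subst phi ->
  regular K1 -> in_plus K1 ->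
  regular K2 -> in_plus K2 ->
  finite_langset (subst_set K1 phi) ->
  finite_langset (subst_set K2 phi) ->
  finite_langset (symdiff_langset (subst_set K1 phi) (subst_set K2 phi)) /\
  exists K3 : lang D, regular K3 /\ in_plus K3 /\
    forall L, symdiff_langset (subst_set K1 phi) (subst_set K2 phi) L <->
              subst_set K3 phi L.
Proof.
move=> _ _ K1plus _ K2plus fR1 fR2.
have fR12 := finite_symdiff_langset fR1 fR2.
split=> //.
have R12K : forall L, symdiff_langset (subst_set K1 phi) (subst_set K2 phi) L ->
    subst_set (fun w => K1 w \/ K2 w) phi L.
  by move=> L [[[w [Kw ->]] | [w [Kw ->]]] _]; exists w; split; auto.
have [ws [wsK R12ws]] := finite_subst_set_sub fR12 R12K.
exists (fun w => w \in ws); split; first exact: regular_mem_seq.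
split=> // w /wsK [/K1plus | /K2plus] //.
Qed.
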